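(* Let $m,n\ge 0$ and let $A:\Sigma^m\to\Sigma^n$, $B:\Sigma\to\Sigma^n$, $C:\Sigma^m\to\Sigma$ be $\mathsf{R}$-module homomorphisms, and let $d\in\mathsf{R}$ be either $0$ or of positive order, i.e. $d=xf$ for some $f\in\mathsf{R}$. Define $F:\Sigma^m\times\Sigma\to\Sigma^n\times\Sigma$ by $F(\alpha,\sigma)=(A(\alpha)+B(\sigma),\,C(\alpha)+\sigma d)$. Let $I$ be any ideal of $\mathsf{R}$, and suppose $F(\alpha,\sigma)=(\beta,\tau)$ for some $\alpha,\beta,\sigma,\tau$ with $\sigma-\tau\in I$. Then there exist unique $\beta'\in\Sigma^n$ and $\sigma'\in\Sigma$ such that $F(\alpha,\sigma')=(\beta',\sigma')$, and for these one has $\sigma'-\sigma\in I$.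
   Context: $\mathsf{R}=\mathbb{R}[[x]]$ is the ring of formal power series with real coefficients. $\Sigma$ is the set of streams of reals (functions $\mathbb{N}\to\mathbb{R}$), identified with $\mathsf{R}$ via $\sigma\mapsto\sum_i\sigma_i x^i$; $\Sigma^k$ is the $k$-fold cartesian product ($\Sigma^0$ a singleton), an $\mathsf{R}$-module with $\mathsf{R}$ acting componentwise by multiplication. The order of a nonzero $f\in\mathsf{R}$ is the least $i$ with $f_i\neq 0$. *)

From Stdlib Require Import Reals.
From Stdlib Require Fin.
Open Scope R_scope.

(** Streams of reals, identified with formal power series sum_i s_i x^i. *)
Definition stream := nat -> R.

Definition szero : stream := fun _ => 0.
Definition sadd (s t : stream) : stream := fun i => s i + t i.
Definition sopp (s : stream) : stream := fun i => - s i.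
Definition ssub (s t : stream) : stream := fun i => s i - t i.
(** Cauchy product: (s*t)_n = sum_{i=0}^n s_i t_{n-i}  (sum_f_R0 f n has n+1 terms). *)
Definition smul (s t : stream) : stream :=
  fun n => sum_f_R0 (fun i => s i * t (n - i)%nat) n.
Definition sX : stream := fun i => if Nat.eqb i 1 then 1 else 0.

(** Sigma^k : k-fold cartesian product of streams (Sigma^0 is a singleton). *)
Definition vec (k : nat) := Fin.t k -> stream.

Definition vadd {k} (u v : vec k) : vec k := fun j => sadd (u j) (v j).
Definition vscale {k} (r : stream) (u : vec k) : vec k := fun j => smul r (u j).

Definition is_hom {X Y : Type} (addX : X -> X -> X) (scX : stream -> X -> X)
  (addY : Y -> Y -> Y) (scY : stream -> Y -> Y) (f : X -> Y) : Prop :=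
  (forall u v, f (addX u v) = addY (f u) (f v)) /\
  (forall r u, f (scX r u) = scY r (f u)).

Definition vec_hom (m n : nat) (f : vec m -> vec n) :=
  is_hom vadd vscale vadd vscale f.
Definition vs_hom (n : nat) (f : stream -> vec n) :=
  is_hom sadd smul vadd vscale f.
Definition sv_hom (m : nat) (f : vec m -> stream) :=
  is_hom vadd vscale sadd smul f.

Definition is_ideal (I : stream -> Prop) : Prop :=
  I szero /\
  (forall s t, I s -> I t -> I (sadd s t)) /\
  (forall r s, I s -> I (smul r s)).

Definition Fmap {m n : nat} (A : vec m -> vec n) (B : stream -> vec n)
  (C : vec m -> stream) (d : stream) (alpha : vec m) (sigma : stream)
  : vec n * stream :=
  (vadd (A alpha) (B sigma), sadd (C alpha) (smul sigma d)).

From Stdlib Require Import Reals Lia FunctionalExtensionality.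
From mathcomp Require Import all_boot all_algebra.
From mathcomp Require Import Rstruct zify.
Import GRing.Theory.

(* Since d has no constant term, sigma' = C(alpha) + sigma' d determines the
   coefficients of sigma' one after another, so the fixed point exists and is
   unique; it is h C(alpha) with h = 1 + h d = (1 - d)^-1.  Applied to
   w = sigma' - sigma, which satisfies w = (tau - sigma) + w d, this gives
   w = h (tau - sigma) in I. *)

Local Open Scope ring_scope.

(* Coefficient [n] of a Cauchy product only sees the coefficients up to [n],
   so it can be computed in the polynomial ring through truncations. *)
Definition trunc (N : nat) (s : stream) : {poly R} := \poly_(i < N.+1) s i.

Lemma sum_f_R0_big (f : nat -> R) n : sum_f_R0 f n = \sum_(i < n.+1) f i.
Proof.
elim: n => [|n IH]; first by rewrite big_ord1.
by rewrite big_ord_recr /= -IH.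
Qed.

Lemma coef_trunc N n s : (n <= N)%N -> (trunc N s)`_n = s n.
Proof. by move=> le_nN; rewrite coef_poly ltnS le_nN. Qed.

Lemma trunc_sadd N s t : trunc N (sadd s t) = trunc N s + trunc N t.
Proof. by apply/polyP => i; rewrite coefD !coef_poly; case: ifP; rewrite ?addr0. Qed.

Lemma trunc_ssub N s t : trunc N (ssub s t) = trunc N s - trunc N t.
Proof. by apply/polyP => i; rewrite coefB !coef_poly; case: ifP; rewrite ?subr0. Qed.

Lemma smul_trunc N n s t : (n <= N)%N -> smul s t n = (trunc N s * trunc N t)`_n.
Proof.
move=> le_nN; rewrite coefM /smul sum_f_R0_big; apply: eq_bigr => i _.
have le_iN : (i <= N)%N by rewrite -ltnS (leq_trans (ltn_ord i)).
by rewrite !coef_trunc // (leq_trans (leq_subr _ _)).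
Qed.

Lemma smul_truncM N n s t (p : {poly R}) : (n <= N)%N ->
  (trunc N (smul s t) * p)`_n = (trunc N s * trunc N t * p)`_n.
Proof.
move=> le_nN; rewrite !coefM; apply: eq_bigr => i _.
have le_iN : (i <= N)%N by rewrite (leq_trans _ le_nN) // -ltnS.
by rewrite coef_trunc // (smul_trunc N).
Qed.

Lemma smulC s t : smul s t = smul t s.
Proof. by apply: functional_extensionality => n; rewrite !(smul_trunc n) // mulrC. Qed.

Lemma smulA s t u : smul (smul s t) u = smul s (smul t u).
Proof.
apply: functional_extensionality => n.
rewrite (smul_trunc n) // smul_truncM // smulC (smul_trunc n) // smul_truncM //.
by rewrite [_ * trunc n s]mulrC mulrA.
Qed.

Lemma smul_saddl s t u : smul (sadd s t) u = sadd (smul s u) (smul t u).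
Proof.
apply: functional_extensionality => n.
by rewrite /sadd !(smul_trunc n) // trunc_sadd mulrDl coefD.
Qed.

Lemma smul_ssubl s t u : smul (ssub s t) u = ssub (smul s u) (smul t u).
Proof.
apply: functional_extensionality => n.
by rewrite /ssub !(smul_trunc n) // trunc_ssub mulrBl coefB.
Qed.

Definition sconst (c : R) : stream := fun i => if i is 0%N then c else 0.

Lemma smul_sconst c s : smul (sconst c) s = fun n => Rmult c (s n).
Proof.
apply: functional_extensionality => n; rewrite (smul_trunc n) //.
have -> : trunc n (sconst c) = c%:P.
  by apply/polyP => -[|i]; rewrite coefC coef_poly //=; case: ifP.
by rewrite coefCM coef_trunc.
Qed.

Local Close Scope ring_scope.
Local Open Scope R_scope.

Lemma ideal_ssub_sym {I : stream -> Prop} {s t : stream} :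
  is_ideal I -> I (ssub s t) -> I (ssub t s).
Proof.
case=> _ [_ I_mul] Ist.
have -> : ssub t s = smul (sconst (-1)) (ssub s t).
  by rewrite smul_sconst; apply: functional_extensionality => i; rewrite /ssub; ring.
exact: I_mul.
Qed.

Lemma smul_sX_0 f : smul sX f 0%nat = 0.
Proof. exact: Rmult_0_l. Qed.

Section FixedPoint.

Variable d : stream.
Hypothesis d0 : d 0%nat = 0.

Lemma smul_eq_upto {s t : stream} {k : nat} :
  (forall i, (i < k)%nat -> s i = t i) ->
  forall i, (i <= k)%nat -> smul s d i = smul t d i.
Proof.
move=> st i le_ik; rewrite /smul; apply: PartSum.sum_eq => j /leP le_ji.
have [lt_jk|ge_jk] := ltnP j k; first by rewrite st.
have -> : j = i by lia.
by rewrite Nat.sub_diag d0 !Rmult_0_r.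
Qed.

Lemma fixpoint_unique {c s t : stream} :
  s = sadd c (smul s d) -> t = sadd c (smul t d) -> s = t.
Proof.
move=> Es Et.
suff agree k : forall i, (i < k)%nat -> s i = t i.
  by apply: functional_extensionality => i; apply: (agree i.+1).
elim: k => [//|k IH] i; rewrite ltnS leq_eqVlt => /orP[/eqP -> | /IH //].
by rewrite Es Et /sadd (smul_eq_upto IH k (leqnn k)).
Qed.

(* Picard iteration: the [k]-th iterate already has its first [k] coefficients right. *)
Fixpoint picard (c : stream) (k : nat) : stream :=
  if k is k'.+1 then sadd c (smul (picard c k') d) else c.

Lemma picardS c k i : (i < k)%nat -> picard c k.+1 i = picard c k i.
Proof.
elim: k i => [//|k IH] i lt_ik /=.
by rewrite /sadd (smul_eq_upto IH i lt_ik).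
Qed.

Lemma picard_stable c k i : (i < k)%nat -> picard c k i = picard c i.+1 i.
Proof.
elim: k => [//|k IH]; rewrite ltnS leq_eqVlt => /orP[/eqP -> // | lt_ik].
by rewrite picardS // IH.
Qed.

Definition fixpoint (c : stream) : stream := fun n => picard c n.+1 n.

Lemma fixpointE c : fixpoint c = sadd c (smul (fixpoint c) d).
Proof.
apply: functional_extensionality => n.
rewrite {1}/fixpoint /= /sadd; congr (_ + _).
apply: (smul_eq_upto _ n (leqnn n)) => i lt_in.
by rewrite /fixpoint picard_stable.
Qed.

Lemma fixpoint_smul c : fixpoint c = smul (fixpoint (sconst 1)) c.
Proof.
apply: fixpoint_unique (fixpointE c) _.
rewrite {1}fixpointE smul_saddl smul_sconst smulA (smulC d c) -smulA.
by congr sadd; apply: functional_extensionality => i; ring.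
Qed.

End FixedPoint.

Lemma Fmap_fixedP m n (A : vec m -> vec n) B C d alpha b s :
  Fmap A B C d alpha s = (b, s) <->
  b = vadd (A alpha) (B s) /\ s = sadd (C alpha) (smul s d).
Proof. by rewrite /Fmap; split=> [[-> ->] | [-> <-]]. Qed.

Theorem lemma5p2 (m n : nat)
  (A : vec m -> vec n) (B : stream -> vec n) (C : vec m -> stream) (d : stream)
  (hA : vec_hom m n A) (hB : vs_hom n B) (hC : sv_hom m C)
  (hd : exists f : stream, d = smul sX f)
  (I : stream -> Prop) (hI : is_ideal I)
  (alpha : vec m) (beta : vec n) (sigma tau : stream)
  (hF : Fmap A B C d alpha sigma = (beta, tau))
  (hst : I (ssub sigma tau)) :
  (exists! p : vec n * stream, Fmap A B C d alpha (snd p) = (fst p, snd p)) /\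
  (forall p : vec n * stream,
     Fmap A B C d alpha (snd p) = (fst p, snd p) -> I (ssub (snd p) sigma)).
Proof.
have d0 : d 0%nat = 0 by case: hd => f ->; apply: smul_sX_0.
case: hF => _ tauE.
split.
- exists (vadd (A alpha) (B (fixpoint d (C alpha))), fixpoint d (C alpha)).
  split; first by apply/Fmap_fixedP; split; last exact: fixpointE.
  case=> b s /= /Fmap_fixedP [-> sE].
  by rewrite (fixpoint_unique d d0 (fixpointE d d0 (C alpha)) sE).
- case=> b s /= /Fmap_fixedP [_ sE].
  have wE : ssub s sigma = sadd (ssub tau sigma) (smul (ssub s sigma) d).
    rewrite smul_ssubl -tauE {1}sE; apply: functional_extensionality => i.
    rewrite /ssub /sadd; ring.
  rewrite (fixpoint_unique d d0 wE (fixpointE d d0 _)) fixpoint_smul //.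
  case: (hI) => _ [_ I_mul]; apply: I_mul.
  exact: ideal_ssub_sym hI hst.
Qed.
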